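(* Let $\mathcal W,\mathcal V$ be arbitrary measurable spaces. Let $h_\star=\langle f_\star,g_\star\rangle$, $\hat h=\langle\hat f,\hat g\rangle$ with measurable $f_\star,\hat f:\mathcal W\to\mathbb R^p$, $g_\star,\hat g:\mathcal V\to\mathbb R^p$ (all relevant expectations finite), and let $\mathcal D_{\mathcal W,i}$, $\mathcal D_{\mathcal V,j}$ ($i,j\in\{1,2\}$) be distributions with $\mathcal D_{i\otimes j}:=\mathcal D_{\mathcal W,i}\otimes\mathcal D_{\mathcal V,j}$. Suppose that for all $(i,j)\ne(2,2)$: $\mathcal R(\hat h;\mathcal D_{i\otimes j})\le\epsilon^2$ and $\mathbb E_{\mathcal D_{i\otimes j}}[h_\star(w,v)^2]\le M_\star^2$, and that $\epsilon<\sigma_\star/2$, where $\sigma_\star^2:=\sigma_p(\mathbb E_{\mathcal D_{\mathcal W,1}}[f_\star f_\star^\top])\,\sigma_p(\mathbb E_{\mathcal D_{\mathcal V,1}}[g_\star g_\star^\top])>0$. Then $\mathcal R(\hat h;\mathcal D_{2\otimes2})\le 64\,\epsilon^2\frac{M_\star^4}{\sigma_\star^4}$.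
   Context: For a scalar predictor $\hat h$ and distribution $\mathcal D$ on $\mathcal W\times\mathcal V$, $\mathcal R(\hat h;\mathcal D):=\mathbb E_{(w,v)\sim\mathcal D}[(h_\star(w,v)-\hat h(w,v))^2]$. $\sigma_p$ denotes the $p$-th largest singular value. *)

From HB Require Import structures.
From mathcomp Require Import all_boot all_order all_algebra.
From mathcomp Require Import all_classical all_reals all_analysis.
Set Implicit Arguments. Unset Strict Implicit. Unset Printing Implicit Defensive.
Import Order.TTheory GRing.Theory Num.Theory.
Local Open Scope ring_scope.
Local Open Scope classical_set_scope.

Definition l2norm {R : realType} {p : nat} (x : 'cV[R]_p) : R :=
  Num.sqrt (\sum_(i < p) (x i 0) ^+ 2).

(* sigma_p(A): the p-th largest (= smallest) singular value of a square
   p x p real matrix, i.e. min_{|x| = 1} |A x| (Courant-Fischer). *)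
Definition sigma_min {R : realType} {p : nat} (A : 'M[R]_p) : R :=
  inf [set l2norm (A *m x) | x in [set x : 'cV[R]_p | l2norm x = 1]].

Definition bilin {R : realType} {p : nat} {W V : Type}
  (f : W -> 'I_p -> R) (g : V -> 'I_p -> R) (w : W) (v : V) : R :=
  \sum_(i < p) f w i * g v i.

Definition second_moment {R : realType} {d} {T : measurableType d} {p : nat}
  (P : probability T R) (f : T -> 'I_p -> R) : 'M[R]_p :=
  \matrix_(i < p, j < p) Rintegral P setT (fun x => f x i * f x j).

Definition risk {R : realType} {dW dV} {W : measurableType dW}
  {V : measurableType dV} {p : nat}
  (PW : probability W R) (PV : probability V R)
  (fs fh : W -> 'I_p -> R) (gs gh : V -> 'I_p -> R) : \bar R :=
  (\int[(PW \x PV)%E]_z ((bilin fs gs z.1 z.2 - bilin fh gh z.1 z.2) ^+ 2)%:E)%E.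

Definition sq_moment {R : realType} {dW dV} {W : measurableType dW}
  {V : measurableType dV} {p : nat}
  (PW : probability W R) (PV : probability V R)
  (f : W -> 'I_p -> R) (g : V -> 'I_p -> R) : \bar R :=
  (\int[(PW \x PV)%E]_z ((bilin f g z.1 z.2) ^+ 2)%:E)%E.

From HB Require Import structures.
From mathcomp Require Import all_boot all_order all_algebra.
From mathcomp Require Import all_classical all_reals all_analysis.
From mathcomp Require Import lra ring measurable_realfun.
Import Order.TTheory GRing.Theory Num.Theory.
Local Open Scope ring_scope.
Local Open Scope classical_set_scope.
Set Implicit Arguments.
Unset Strict Implicit.
Unset Printing Implicit Defensive.

(* Let F1, G1 be the second moments of f* under D_{W,1} and of g* under D_{V,1},
   and put L := F1^-1 E_{W,1}[f* fh^T], U := G1^-1 E_{V,1}[g* gh^T].  Being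
   symmetric and positive semidefinite, F1 and G1 dominate sigma_f := sigma_p(F1)
   and sigma_g := sigma_p(G1) times the identity.  Integrating out w ~ D_{W,1}
   turns the risk on D_{1(x)j} into the expectation over v of a quadratic form in
   (g*(v), gh(v)), whose Schur complement gives sigma_f E_{V,j}|g* - L gh|^2 <= eps^2;
   symmetrically sigma_g E_{W,i}|f* - U fh|^2 <= eps^2, and the moment bounds give
   sigma_g E|f*|^2, sigma_f E|g*|^2 <= M*^2.  For j = 1 the first bound yields
   |I - U L^T|_F^2 <= eps^2 / sigma*^2 <= 1/4, so U L^T is close to the identity
   and <f*, g*> - <fh, gh> splits into four terms, each a product of the residuals
   f* - U fh, g* - L gh and of f*, g*; integrating over D_{2(x)2}, where w and v
   are independent, bounds each term by the quantities above. *)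

(** * Euclidean linear algebra *)

Section VectorAlgebra.
Variables (R : realFieldType) (n : nat).
Implicit Types (a b c t : R) (u v x y w : 'cV[R]_n) (A K : 'M[R]_n).

Definition vdot u v : R := \sum_i u i 0 * v i 0.
Definition sqnorm u : R := vdot u u.
Definition sqfrob A : R := \sum_i \sum_j A i j ^+ 2.
Definition psdmx K : Prop := forall x, 0 <= vdot x (K *m x).

Lemma vdotC u v : vdot u v = vdot v u.
Proof. by apply: eq_bigr => i _; rewrite mulrC. Qed.

Lemma vdotDl u v x : vdot (u + v) x = vdot u x + vdot v x.
Proof. by rewrite /vdot -big_split; apply: eq_bigr => i _; rewrite mxE mulrDl. Qed.

Lemma vdotDr u v x : vdot x (u + v) = vdot x u + vdot x v.
Proof. by rewrite vdotC vdotDl !(vdotC x). Qed.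

Lemma vdotZl a u v : vdot (a *: u) v = a * vdot u v.
Proof. by rewrite /vdot mulr_sumr; apply: eq_bigr => i _; rewrite mxE mulrA. Qed.

Lemma vdotZr a u v : vdot u (a *: v) = a * vdot u v.
Proof. by rewrite vdotC vdotZl vdotC. Qed.

Lemma vdotNl u v : vdot (- u) v = - vdot u v.
Proof. by rewrite -scaleN1r vdotZl mulN1r. Qed.

Lemma vdotNr u v : vdot u (- v) = - vdot u v.
Proof. by rewrite vdotC vdotNl vdotC. Qed.

Lemma vdotBl u v x : vdot (u - v) x = vdot u x - vdot v x.
Proof. by rewrite vdotDl vdotNl. Qed.

Lemma vdotBr u v x : vdot x (u - v) = vdot x u - vdot x v.
Proof. by rewrite vdotDr vdotNr. Qed.

Lemma vdot0l u : vdot 0 u = 0.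
Proof. by rewrite /vdot big1 // => i _; rewrite mxE mul0r. Qed.

Lemma vdot0r u : vdot u 0 = 0.
Proof. by rewrite vdotC vdot0l. Qed.

Lemma vdot_mulmxr u A v : vdot u (A *m v) = vdot (A^T *m u) v.
Proof.
have vdotE x y : vdot x y = (x^T *m y) 0 0.
  by rewrite mxE; apply: eq_bigr => i _; rewrite mxE.
by rewrite !vdotE trmx_mul trmxK mulmxA.
Qed.

Lemma vdot_deltal (k : 'I_n) x : vdot (delta_mx k 0) x = x k 0.
Proof.
rewrite /vdot (bigD1 k) //= big1 ?addr0; first by rewrite mxE !eqxx mul1r.
by move=> i ik; rewrite mxE (negbTE ik) mul0r.
Qed.

Lemma sqnorm_ge0 u : 0 <= sqnorm u.
Proof. by apply: sumr_ge0 => i _; rewrite -expr2 sqr_ge0. Qed.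

Lemma sqnorm_eq0 u : (sqnorm u == 0) = (u == 0).
Proof.
apply/idP/eqP => [|->]; last by rewrite /sqnorm vdot0l.
rewrite psumr_eq0 => [/allP u0|i _]; last by rewrite -expr2 sqr_ge0.
apply/matrixP => i j; rewrite (ord1 j) mxE.
by have := u0 i (mem_index_enum _); rewrite -expr2 sqrf_eq0 => /eqP.
Qed.

Lemma sqnorm_gt0 u : (0 < sqnorm u) = (u != 0).
Proof. by rewrite lt_def sqnorm_ge0 sqnorm_eq0 andbT. Qed.

Lemma sqnormD u v : sqnorm (u + v) = sqnorm u + 2 * vdot u v + sqnorm v.
Proof. by rewrite /sqnorm vdotDl !vdotDr (vdotC v u); ring. Qed.

Lemma sqnormN u : sqnorm (- u) = sqnorm u.
Proof. by rewrite /sqnorm vdotNl vdotNr opprK. Qed.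

Lemma sqnormZ a u : sqnorm (a *: u) = a ^+ 2 * sqnorm u.
Proof. by rewrite /sqnorm vdotZl vdotZr mulrA expr2. Qed.

Lemma sqnorm_delta (k : 'I_n) : sqnorm (delta_mx k 0 : 'cV[R]_n) = 1.
Proof. by rewrite /sqnorm vdot_deltal mxE !eqxx. Qed.

(* [t = -b/c] minimises the quadratic; when [c = 0] it is affine and
   nonnegative, hence constant. *)
Lemma quadratic_ge0_discr a b c : 0 <= c ->
  (forall t, 0 <= a + 2 * t * b + t ^+ 2 * c) -> b ^+ 2 <= a * c.
Proof.
rewrite le_eqVlt => /predU1P[<- | c_gt0] q_ge0.
  have [-> | b_neq0] := eqVneq b 0; first by rewrite expr0n mulr0.
  have := q_ge0 (- (a + 1) / (2 * b)).
  have -> : a + 2 * (- (a + 1) / (2 * b)) * b + (- (a + 1) / (2 * b)) ^+ 2 * 0 = -1.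
    by field.
  by rewrite ler0N1.
have := q_ge0 (- b / c).
have -> : a + 2 * (- b / c) * b + (- b / c) ^+ 2 * c = a - b ^+ 2 / c.
  by field; rewrite gt_eqF.
by rewrite subr_ge0 ler_pdivrMr.
Qed.

Lemma CauchySchwarz_psd K x y : K^T = K -> psdmx K ->
  vdot x (K *m y) ^+ 2 <= vdot x (K *m x) * vdot y (K *m y).
Proof.
move=> K_sym K_psd; apply: quadratic_ge0_discr => // t.
have Kyx : vdot y (K *m x) = vdot x (K *m y) by rewrite vdot_mulmxr K_sym vdotC.
have := K_psd (x + t *: y).
rewrite mulmxDr vdotDl !vdotDr -scalemxAr !vdotZl !vdotZr Kyx expr2; lra.
Qed.

Lemma psdmx1 : psdmx 1%:M.
Proof. by move=> x; rewrite mul1mx sqnorm_ge0. Qed.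

Lemma CauchySchwarz u v : vdot u v ^+ 2 <= sqnorm u * sqnorm v.
Proof. by have := CauchySchwarz_psd u v (trmx1 _ _) psdmx1; rewrite !mul1mx. Qed.

Lemma sqfrob_ge0 A : 0 <= sqfrob A.
Proof. by apply: sumr_ge0 => i _; apply: sumr_ge0 => j _; exact: sqr_ge0. Qed.

Lemma sqfrob_tr A : sqfrob A^T = sqfrob A.
Proof. by rewrite /sqfrob exchange_big; apply: eq_bigr => i _; apply: eq_bigr => j _; rewrite mxE. Qed.

Lemma sqfrobE A : sqfrob A = \sum_k sqnorm (A *m delta_mx k 0).
Proof.
rewrite /sqfrob exchange_big; apply: eq_bigr => k _.
by apply: eq_bigr => i _; rewrite -colE !mxE expr2.
Qed.

Lemma sqfrob1 : sqfrob 1%:M = n%:R.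
Proof.
rewrite sqfrobE (eq_bigr (fun=> 1)) ?sumr_const ?card_ord // => k _.
by rewrite mul1mx sqnorm_delta.
Qed.

Lemma sqnorm_mulmx_le A x : sqnorm (A *m x) <= sqfrob A * sqnorm x.
Proof.
rewrite /sqfrob mulr_suml; apply: ler_sum => i _.
have -> : (A *m x) i 0 * (A *m x) i 0 = vdot (row i A)^T x ^+ 2.
  by rewrite expr2 mxE /vdot; congr (_ * _); apply: eq_bigr => j _; rewrite !mxE.
have -> : \sum_j A i j ^+ 2 = sqnorm (row i A)^T.
  by apply: eq_bigr => j _; rewrite !mxE expr2.
exact: CauchySchwarz.
Qed.

Lemma sqnorm_sub_sum A B x y : sqnorm (A *m x - B *m y) =
  \sum_k (vdot (A^T *m delta_mx k 0) x - vdot (B^T *m delta_mx k 0) y) ^+ 2.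
Proof.
by apply: eq_bigr => k _; rewrite -!vdot_mulmxr -vdotBr vdot_deltal expr2.
Qed.

Lemma vdot_mulmx_sqr_le A c u v : (forall y, sqnorm (A *m y) <= c * sqnorm y) ->
  vdot u (A *m v) ^+ 2 <= c * (sqnorm u * sqnorm v).
Proof.
move=> A_le; apply: le_trans (CauchySchwarz _ _) _.
by rewrite mulrCA ler_wpM2l ?sqnorm_ge0.
Qed.

End VectorAlgebra.

Section QuadraticForms.
Variables (R : realFieldType) (n : nat).
Implicit Types (s m : R) (x y w : 'cV[R]_n) (A B K F C H : 'M[R]_n).

Lemma vdot_mulmx_le A w : 2 * vdot w (A *m w) <= (1 + sqfrob A) * sqnorm w.
Proof.
have := sqnorm_ge0 (w - A *m w).
rewrite sqnormD sqnormN vdotNr mulrDl mul1r => h.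
by have := sqnorm_mulmx_le A w; lra.
Qed.

Lemma unitmx_of_injective B : (forall x, B *m x = 0 -> x = 0) -> B \in unitmx.
Proof.
move=> B_inj; rewrite -unitmx_tr unitmxE unitfE.
apply/negP => /det0P [v v_neq0 vB0].
have /B_inj /(congr1 trmx) : B *m v^T = 0 by rewrite -[B]trmxK -trmx_mul vB0 trmx0.
by rewrite trmxK trmx0 => v0; rewrite v0 eqxx in v_neq0.
Qed.

Lemma unitmx_of_coercive F s : 0 < s ->
  (forall x, s * sqnorm x <= vdot x (F *m x)) -> F \in unitmx.
Proof.
move=> s_gt0 F_coer; apply: unitmx_of_injective => x Fx0.
have := F_coer x; rewrite Fx0 vdot0r pmulr_rle0 // => x_le0.
by apply/eqP; rewrite -sqnorm_eq0 eq_le x_le0 sqnorm_ge0.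
Qed.

(* [qform F C H a b] is the second moment of [a.u - b.v] when [F], [C], [H]
   are the moments E[u u^T], E[u v^T], E[v v^T]. *)
Definition qform F C H (a b : 'cV[R]_n) : R :=
  vdot a (F *m a) - 2 * vdot a (C *m b) + vdot b (H *m b).

Lemma qform_schur F C H a b : F^T = F -> F \in unitmx ->
  let r := a - invmx F *m C *m b in
  qform F C H a b = vdot r (F *m r) + qform F C H (invmx F *m C *m b) b.
Proof.
move=> F_sym F_unit r; rewrite /qform /r.
set Lb := invmx F *m C *m b.
have FL : F *m Lb = C *m b by rewrite /Lb !mulmxA mulmxV // mul1mx.
have LFa : vdot Lb (F *m a) = vdot a (C *m b) by rewrite vdot_mulmxr F_sym FL vdotC.
by rewrite mulmxBr FL !vdotBl !vdotBr LFa; ring.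
Qed.

Lemma qform_ge_residual F C H s a b : F^T = F -> 0 < s ->
  (forall x, s * sqnorm x <= vdot x (F *m x)) ->
  (forall a b, 0 <= qform F C H a b) ->
  s * sqnorm (a - invmx F *m C *m b) <= qform F C H a b.
Proof.
move=> F_sym s_gt0 F_coer q_ge0.
rewrite qform_schur //; last exact: unitmx_of_coercive F_coer.
by apply: le_trans (F_coer _) _; rewrite lerDl.
Qed.

Lemma qform0r F C H a : qform F C H a 0 = vdot a (F *m a).
Proof. by rewrite /qform !mulmx0 vdot0r vdot0l mulr0 subr0 addr0. Qed.

Lemma sqnorm_mulmx_psd_shift K m y : K^T = K -> psdmx (K - m%:M) -> sqnorm y = 1 ->
  sqnorm (K *m y) <=
    m ^+ 2 + (vdot y (K *m y) - m) * ((1 + sqfrob (K - m%:M)) / 2 + 2 * m).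
Proof.
move=> K_sym Km_psd y1; set K' := K - m%:M; set w := K' *m y.
have K'_sym : K'^T = K' by rewrite /K' linearB /= tr_scalar_mx K_sym.
have dE : vdot y (K' *m y) = vdot y (K *m y) - m.
  by rewrite mulmxBl mul_scalar_mx vdotBr vdotZr -/(sqnorm y) y1 mulr1.
have w_le : sqnorm w <= vdot y (K' *m y) * ((1 + sqfrob K') / 2).
  have yw : vdot y (K' *m w) = sqnorm w by rewrite vdot_mulmxr K'_sym vdotC.
  have CS := CauchySchwarz_psd y w K'_sym Km_psd.
  have wKw := vdot_mulmx_le K' w.
  have [w0 | w_neq0] := eqVneq w 0.
    by rewrite w0 /sqnorm vdot0l mulr_ge0 ?divr_ge0 ?addr_ge0 ?sqfrob_ge0.
  have w_gt0 : 0 < sqnorm w by rewrite sqnorm_gt0.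
  rewrite yw in CS; have := Km_psd y; have := sqfrob_ge0 K'; nra.
rewrite -dE; set d := vdot y (K' *m y) in w_le *.
have wy : vdot w y = d by rewrite vdotC.
have -> : K *m y = w + m *: y by rewrite /w mulmxBl mul_scalar_mx subrK.
by rewrite sqnormD sqnormZ y1 vdotZr wy; lra.
Qed.

End QuadraticForms.

Section Euclidean.
Variables (R : realType) (n : nat).
Implicit Types (s : R) (x y : 'cV[R]_n) (A K : 'M[R]_n).

Lemma l2normE x : l2norm x = Num.sqrt (sqnorm x).
Proof. by congr Num.sqrt; apply: eq_bigr => i _; rewrite expr2. Qed.

Lemma l2norm_ge0 x : 0 <= l2norm x.
Proof. exact: sqrtr_ge0. Qed.

Lemma sqr_l2norm x : l2norm x ^+ 2 = sqnorm x.
Proof. by rewrite l2normE sqr_sqrtr // sqnorm_ge0. Qed.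

Lemma abs_vdot_le x y : `|vdot x y| <= l2norm x * l2norm y.
Proof.
rewrite -(ler_pXn2r (_ : 0 < 2)%N) ?nnegrE ?mulr_ge0 ?l2norm_ge0 //.
by rewrite exprMn !sqr_l2norm real_normK ?num_real // CauchySchwarz.
Qed.

Lemma l2normD x y : l2norm (x + y) <= l2norm x + l2norm y.
Proof.
rewrite -(ler_pXn2r (_ : 0 < 2)%N) ?nnegrE ?addr_ge0 ?l2norm_ge0 //.
rewrite sqr_l2norm sqnormD sqrrD !sqr_l2norm mulr2n.
by have := le_trans (ler_norm _) (abs_vdot_le x y); lra.
Qed.

Lemma sqnorm1_scale x : x != 0 ->
  exists2 y, sqnorm y = 1 & x = Num.sqrt (sqnorm x) *: y.
Proof.
rewrite -sqnorm_gt0 => x_gt0; have r_gt0 : 0 < Num.sqrt (sqnorm x) by rewrite sqrtr_gt0.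
exists ((Num.sqrt (sqnorm x))^-1 *: x); last by rewrite scalerA mulfV ?gt_eqF // scale1r.
by rewrite sqnormZ exprVn sqr_sqrtr ?sqnorm_ge0 // mulVf // gt_eqF.
Qed.

Lemma sigma_min_ge0 A : 0 <= sigma_min A.
Proof.
rewrite /sigma_min; set S := [set _ | _ in _].
have [-> | /set0P S_neq0] := eqVneq S set0; first by rewrite inf0.
by apply: lb_le_inf => // _ [x _ <-]; exact: l2norm_ge0.
Qed.

Lemma sigma_min_sqnorm_le A x : sigma_min A ^+ 2 * sqnorm x <= sqnorm (A *m x).
Proof.
have [-> | /sqnorm1_scale [y y1 ->]] := eqVneq x 0.
  by rewrite /sqnorm vdot0l mulr0 sqnorm_ge0.
rewrite -scalemxAr !sqnormZ y1 mulr1 mulrC ler_wpM2l ?sqr_ge0 //.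
rewrite -sqr_l2norm ler_sqr ?nnegrE ?sigma_min_ge0 ?l2norm_ge0 //.
apply: ge_inf; first by exists 0 => _ [z _ <-]; exact: l2norm_ge0.
by exists y => //; rewrite /= l2normE y1 sqrtr1.
Qed.

End Euclidean.

Lemma sigma_min_gt0_dim (R : realType) n (A : 'M[R]_n) : 0 < sigma_min A -> (0 < n)%N.
Proof.
case: n A => [|m] A //; rewrite /sigma_min.
suff -> : [set l2norm (A *m x) | x in [set x | l2norm x = 1]] = set0 by rewrite inf0 ltxx.
apply/seteqP; split => // r [x]; rewrite /= /l2norm big_ord0 sqrtr0 => /eqP.
by rewrite eq_sym oner_eq0.
Qed.

Section PsdCoercive.
Variables (R : realType) (n : nat) (K : 'M[R]_n).
Hypotheses (K_sym : K^T = K) (K_psd : psdmx K).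

Let rayleigh := [set vdot y (K *m y) | y in [set y : 'cV[R]_n | sqnorm y = 1]].

Let rayleigh_lb : has_lbound rayleigh.
Proof. by exists 0 => _ [y _ <-]. Qed.

Let rayleigh_inf_le x : inf rayleigh * sqnorm x <= vdot x (K *m x).
Proof.
have [-> | /sqnorm1_scale [y y1 ->]] := eqVneq x 0.
  by rewrite /sqnorm !vdot0l mulr0.
rewrite -scalemxAr sqnormZ vdotZl vdotZr y1 mulr1 mulrA -expr2 mulrC.
rewrite ler_wpM2l ?sqr_ge0 //; apply: ge_inf => //; by exists y.
Qed.

(* For an approximate minimiser [y] of the Rayleigh quotient, with infimum [m],
   [sqnorm_mulmx_psd_shift] makes [|K y|] close to [m]; hence [s <= m]. *)
Lemma psd_coercive s : 0 <= s -> (forall x, s ^+ 2 * sqnorm x <= sqnorm (K *m x)) ->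
  forall x, s * sqnorm x <= vdot x (K *m x).
Proof.
move=> s_ge0 K_ge x; have [-> | x_neq0] := eqVneq x 0.
  by rewrite /sqnorm !vdot0l mulr0.
set m := inf rayleigh.
suff s_le_m : s <= m.
  by apply: le_trans (rayleigh_inf_le x); rewrite ler_wpM2r ?sqnorm_ge0.
have rayleigh_neq0 : rayleigh !=set0.
  by have [y y1 _] := sqnorm1_scale x_neq0; exists (vdot y (K *m y)); exists y.
have m_ge0 : 0 <= m by apply: lb_le_inf => // _ [y _ <-].
have Km_psd : psdmx (K - m%:M).
  by move=> y; rewrite mulmxBl mul_scalar_mx vdotBr vdotZr subr_ge0 rayleigh_inf_le.
set c := (1 + sqfrob (K - m%:M)) / 2 + 2 * m.
have c_ge0 : 0 <= c by rewrite addr_ge0 ?mulr_ge0 ?divr_ge0 ?addr_ge0 ?sqfrob_ge0.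
rewrite -ler_sqr ?nnegrE //; apply/ler_addgt0Pr => e e_gt0.
have e'_gt0 : 0 < e / (c + 1) by rewrite divr_gt0 // ltr_wpDl.
have [_ [y y1 <-] y_near] := inf_adherent e'_gt0 (conj rayleigh_neq0 rayleigh_lb).
have := sqnorm_mulmx_psd_shift K_sym Km_psd y1.
have := K_ge y; rewrite y1 mulr1 -/m -/c.
have : e / (c + 1) * c <= e.
  by rewrite mulrAC ler_pdivrMr ?ltr_wpDl //; nra.
have := rayleigh_inf_le y; rewrite y1 mulr1 -/m.
nra.
Qed.

End PsdCoercive.

Lemma sigma_min_coercive (R : realType) n (K : 'M[R]_n) : K^T = K -> psdmx K ->
  forall x, sigma_min K * sqnorm x <= vdot x (K *m x).
Proof.
move=> K_sym K_psd; apply: psd_coercive => //; first exact: sigma_min_ge0.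
exact: sigma_min_sqnorm_le.
Qed.

Section NearIdentity.
Variables (R : realType) (n : nat) (B : 'M[R]_n) (eta : R).
Hypotheses (eta_ge0 : 0 <= eta) (eta_le_half : eta <= 1 / 2).
Hypothesis B_near1 : sqfrob (1%:M - B) <= eta ^+ 2.
Implicit Types (x y : 'cV[R]_n).

Let l2norm_1B x : l2norm ((1%:M - B) *m x) <= eta * l2norm x.
Proof.
rewrite -ler_sqr ?nnegrE ?mulr_ge0 ?l2norm_ge0 // exprMn !sqr_l2norm.
apply: le_trans (sqnorm_mulmx_le _ _) _.
by rewrite ler_wpM2r ?sqnorm_ge0.
Qed.

Let l2norm_le_B x : l2norm x <= 2 * l2norm (B *m x).
Proof.
have dec : B *m x + (1%:M - B) *m x = x by rewrite mulmxBl mul1mx addrC subrK.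
have := l2normD (B *m x) ((1%:M - B) *m x); rewrite dec.
by have := l2norm_1B x; have := l2norm_ge0 x; have := eta_le_half; nra.
Qed.

Lemma unitmx_near1 : B \in unitmx.
Proof.
apply: unitmx_of_injective => x Bx0.
have := l2norm_le_B x; rewrite Bx0 [l2norm 0]l2normE /sqnorm vdot0l sqrtr0 mulr0 => x_le0.
by apply/eqP; rewrite -sqnorm_eq0 -sqr_l2norm sqrf_eq0 eq_le x_le0 l2norm_ge0.
Qed.

Section RightInverse.
Variable Y : 'M[R]_n.
Hypothesis BY1 : B *m Y = 1%:M.

Lemma sqnorm_rinv_near1 y : sqnorm (Y *m y) <= 4 * sqnorm y.
Proof.
have := l2norm_le_B (Y *m y); rewrite mulmxA BY1 mul1mx -!sqr_l2norm.
by have := l2norm_ge0 y; have := l2norm_ge0 (Y *m y); nra.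
Qed.

Lemma sqnorm_1_rinv_near1 y : sqnorm ((1%:M - Y) *m y) <= 4 * eta ^+ 2 * sqnorm y.
Proof.
have -> : (1%:M - Y) *m y = - ((1%:M - B) *m (Y *m y)).
  by rewrite !mulmxBl !mul1mx mulmxA BY1 mul1mx opprB.
have : l2norm ((1%:M - B) *m (Y *m y)) <= 2 * eta * l2norm y.
  apply: le_trans (l2norm_1B _) _; rewrite -mulrA mulrCA ler_wpM2l //.
  by have := l2norm_le_B (Y *m y); rewrite mulmxA BY1 mul1mx.
rewrite sqnormN -!sqr_l2norm.
by have := l2norm_ge0 ((1%:M - B) *m (Y *m y)); have := l2norm_ge0 y; nra.
Qed.

End RightInverse.
End NearIdentity.

Section BilinearPerturbation.
Variables (R : realType) (n : nat) (U L : 'M[R]_n) (eta : R).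
Hypotheses (eta_ge0 : 0 <= eta) (eta_le_half : eta <= 1 / 2).
Hypothesis UL_near1 : sqfrob (1%:M - U *m L^T) <= eta ^+ 2.

Let sqr_add4_le (a1 a2 a3 a4 : R) :
  (a1 + a2 + a3 - a4) ^+ 2 <= 4 * (a1 ^+ 2 + a2 ^+ 2 + a3 ^+ 2 + a4 ^+ 2).
Proof.
have := sqr_ge0 (a1 - a2); have := sqr_ge0 (a1 - a3); have := sqr_ge0 (a1 + a4).
have := sqr_ge0 (a2 - a3); have := sqr_ge0 (a2 + a4); have := sqr_ge0 (a3 + a4).
by rewrite !expr2; lra.
Qed.

(* With [B := L U^T] close to the identity, [U] and [L] are invertible and
   [Y := U^-T L^-1] is the right inverse of [B]; writing [fh = U^-1 (f - d)]
   and [gh = L^-1 (g - e)] splits [<f, g> - <fh, gh>] into four terms. *)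
Lemma bilinear_perturbation (f fh g gh : 'cV[R]_n) :
  (vdot f g - vdot fh gh) ^+ 2 <=
    16 * (eta ^+ 2 * sqnorm f * sqnorm g + sqnorm (f - U *m fh) * sqnorm g
          + sqnorm f * sqnorm (g - L *m gh)
          + sqnorm (f - U *m fh) * sqnorm (g - L *m gh)).
Proof.
set d := f - U *m fh; set e := g - L *m gh; set B := L *m U^T.
have B_near1 : sqfrob (1%:M - B) <= eta ^+ 2.
  by rewrite -sqfrob_tr linearB /= trmx1 trmx_mul trmxK.
have /andP [L_unit U_unit] : (L \in unitmx) && (U^T \in unitmx).
  by rewrite -unitmx_mul; exact: unitmx_near1 B_near1.
rewrite unitmx_tr in U_unit.
set Y := (invmx U)^T *m invmx L.
have BY1 : B *m Y = 1%:M.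
  by rewrite /B /Y mulmxA -(mulmxA L) -trmx_mul mulVmx // trmx1 mulmx1 mulmxV.
have -> : vdot f g - vdot fh gh = vdot f ((1%:M - Y) *m g) + vdot d (Y *m g)
                                   + vdot f (Y *m e) - vdot d (Y *m e).
  have UYL : U^T *m Y *m L = 1%:M.
    by rewrite /Y mulmxA -trmx_mul mulVmx // trmx1 mul1mx mulVmx.
  have -> : vdot fh gh = vdot (f - d) (Y *m (g - e)).
    have LYU : L^T *m Y^T *m U = 1%:M.
      by rewrite -[U]trmxK -!trmx_mul mulmxA UYL trmx1.
    by rewrite !subKr vdotC vdot_mulmxr vdotC vdot_mulmxr !mulmxA LYU mul1mx.
  by rewrite !mulmxBr !mulmxBl mul1mx !vdotBl !vdotBr; ring.
have Y_le := vdot_mulmx_sqr_le _ _ (sqnorm_rinv_near1 eta_ge0 eta_le_half B_near1 BY1).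
have Y1_le := vdot_mulmx_sqr_le _ _
  (sqnorm_1_rinv_near1 eta_ge0 eta_le_half B_near1 BY1).
apply: le_trans (sqr_add4_le _ _ _ _) _.
have := Y1_le f g; have := Y_le d g; have := Y_le f e; have := Y_le d e.
lra.
Qed.

End BilinearPerturbation.

(** * Second moments *)

Definition colv (R : Type) n (x : 'I_n -> R) : 'cV[R]_n := \col_i x i.

Lemma colv0 (R : nmodType) n : colv (fun _ : 'I_n => 0 : R) = 0.
Proof. by apply/matrixP => i j; rewrite !mxE. Qed.

Lemma vdot_colv (R : realFieldType) n (a : 'cV[R]_n) x :
  vdot a (colv x) = \sum_k a k 0 * x k.
Proof. by apply: eq_bigr => k _; rewrite mxE. Qed.

Section Moments.
Context (R : realType) (d : measure_display) (T : measurableType d).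
Variables (P : probability T R) (n : nat).
Implicit Types (u v : T -> 'I_n -> R) (a b : 'cV[R]_n).

Definition measurable_feature u : Prop := forall i, measurable_fun setT (fun w => u w i).

Definition sqintegrable u : Prop :=
  measurable_feature u /\
  (forall i, P.-integrable setT (fun w => (u w i ^+ 2)%:E)).

Definition cross_moment u v : 'M[R]_n :=
  \matrix_(i, j) \int[P]_w (u w i * v w j).

Lemma EFin_Rintegral (f : T -> R) : P.-integrable setT (EFin \o f) ->
  (\int[P]_w f w)%:E = (\int[P]_w (f w)%:E)%E.
Proof. by move=> f_int; rewrite fineK ?integrable_fin_num. Qed.

Lemma integrable_mul_sqr (f g : T -> R) :
  measurable_fun setT f -> measurable_fun setT g ->
  P.-integrable setT (fun w => (f w ^+ 2)%:E) ->
  P.-integrable setT (fun w => (g w ^+ 2)%:E) ->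
  P.-integrable setT (fun w => (f w * g w)%:E).
Proof.
move=> mf mg if2 ig2.
apply: le_integrable (integrableD _ if2 ig2) => //.
  by apply/measurable_EFinP; exact: measurable_funM.
move=> w _ /=; rewrite lee_fin normrM [X in _ <= X]ger0_norm ?addr_ge0 ?sqr_ge0 //.
have := sqr_ge0 (`|f w| - `|g w|); rewrite sqrrB !real_normK ?num_real //.
by have := mulr_ge0 (normr_ge0 (f w)) (normr_ge0 (g w)); lra.
Qed.

Section SquareIntegrable.
Variables u v : T -> 'I_n -> R.
Hypotheses (u_sqint : sqintegrable u) (v_sqint : sqintegrable v).

Let integrable_coord_mul k l : P.-integrable setT (fun w => (u w k * v w l)%:E).
Proof. by apply: integrable_mul_sqr; [exact: u_sqint.1 | exact: v_sqint.1 |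
  exact: u_sqint.2 | exact: v_sqint.2]. Qed.

Lemma expect_vdot_mul a b :
  P.-integrable setT (fun w => (vdot a (colv (u w)) * vdot b (colv (v w)))%:E) /\
  (\int[P]_w (vdot a (colv (u w)) * vdot b (colv (v w)))%:E =
    (vdot a (cross_moment u v *m b))%:E)%E.
Proof.
have expand w : (vdot a (colv (u w)) * vdot b (colv (v w)))%:E =
    (\sum_k \sum_l (a k 0 * b l 0)%:E * (u w k * v w l)%:E)%E.
  rewrite !vdot_colv mulr_suml -sumEFin; apply: eq_bigr => k _.
  rewrite mulr_sumr -sumEFin; apply: eq_bigr => l _.
  by rewrite -EFinM; congr EFin; ring.
have int_row k : P.-integrable setT
    (fun w => \sum_l (a k 0 * b l 0)%:E * (u w k * v w l)%:E)%E.
  by apply: integrable_sum => // l _; exact: integrableZl.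
split.
  apply: eq_integrable (integrable_sum _ _ (fun k _ => int_row k)) => // w _.
  by rewrite expand.
under eq_integral => w _ do rewrite expand.
rewrite integral_sum // /vdot -sumEFin; apply: eq_bigr => k _.
rewrite integral_sum //; last by move=> l; exact: integrableZl.
rewrite !mxE mulr_sumr -sumEFin; apply: eq_bigr => l _.
rewrite integralZl // mxE -EFin_Rintegral //; last exact: integrable_coord_mul.
by rewrite !EFinM -muleA (muleC (b l 0)%:E).
Qed.

End SquareIntegrable.

Lemma cross_moment_sym u : (cross_moment u u)^T = cross_moment u u.
Proof. by apply/matrixP => i j; rewrite !mxE; apply: eq_Rintegral => w _; exact: mulrC. Qed.

Section Residual.
Variables u v : T -> 'I_n -> R.
Hypotheses (u_sqint : sqintegrable u) (v_sqint : sqintegrable v).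
Let F := cross_moment u u.
Let C := cross_moment u v.
Let H := cross_moment v v.

Lemma expect_sqr_vdot_sub a b :
  P.-integrable setT (fun w => ((vdot a (colv (u w)) - vdot b (colv (v w))) ^+ 2)%:E) /\
  (\int[P]_w ((vdot a (colv (u w)) - vdot b (colv (v w))) ^+ 2)%:E =
    (qform F C H a b)%:E)%E.
Proof.
have [int_aa E_aa] := expect_vdot_mul u_sqint u_sqint a a.
have [int_ab E_ab] := expect_vdot_mul u_sqint v_sqint a b.
have [int_bb E_bb] := expect_vdot_mul v_sqint v_sqint b b.
set x := fun w => vdot a (colv (u w)); set y := fun w => vdot b (colv (v w)).
have expand w : ((x w - y w) ^+ 2)%:E =
    ((x w * x w)%:E + (-2)%:E * (x w * y w)%:E + (y w * y w)%:E)%E.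
  by rewrite -EFinM -!EFinD; congr EFin; ring.
have int_ab' := integrableZl measurableT (-2) int_ab.
split.
  apply: eq_integrable (integrableD _ (integrableD _ int_aa int_ab') int_bb) => // w _.
  by rewrite expand.
under eq_integral => w _ do rewrite expand.
rewrite integralD ?integralD ?integralZl ?E_aa ?E_ab ?E_bb //; last first.
  exact: integrableD.
by rewrite -EFinM -!EFinD /qform; congr EFin; ring.
Qed.

Lemma qform_cross_moment_ge0 a b : 0 <= qform F C H a b.
Proof.
rewrite -lee_fin; have [_ <-] := expect_sqr_vdot_sub a b.
by apply: integral_ge0 => w _; rewrite lee_fin sqr_ge0.
Qed.

Lemma expect_sqr_ge_residual s a b : 0 < s ->
  (forall x, s * sqnorm x <= vdot x (F *m x)) ->
  ((s * sqnorm (a - invmx F *m C *m b))%:E <=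
    \int[P]_w ((vdot a (colv (u w)) - vdot b (colv (v w))) ^+ 2)%:E)%E.
Proof.
move=> s_gt0 F_coer; have [_ ->] := expect_sqr_vdot_sub a b.
by rewrite lee_fin qform_ge_residual ?cross_moment_sym //; exact: qform_cross_moment_ge0.
Qed.

Lemma integrable_sqnorm_residual (B : 'M[R]_n) :
  P.-integrable setT (fun w => (sqnorm (colv (u w) - B *m colv (v w)))%:E).
Proof.
under eq_fun => w do rewrite -[colv (u w)]mul1mx sqnorm_sub_sum -sumEFin.
apply: integrable_sum => // k _.
by have [] := expect_sqr_vdot_sub (1%:M^T *m delta_mx k 0) (B^T *m delta_mx k 0).
Qed.

Lemma expect_sqnorm_residual_ge s (B : 'M[R]_n) : 0 < s ->
  (forall x, s * sqnorm x <= vdot x (F *m x)) ->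
  ((s * sqfrob (1%:M - invmx F *m C *m B^T))%:E <=
    \int[P]_w (sqnorm (colv (u w) - B *m colv (v w)))%:E)%E.
Proof.
move=> s_gt0 F_coer.
under eq_integral => w _ do rewrite -[colv (u w)]mul1mx sqnorm_sub_sum -sumEFin.
rewrite integral_sum //; last first.
  by move=> k; have [] := expect_sqr_vdot_sub (1%:M^T *m delta_mx k 0) (B^T *m delta_mx k 0).
rewrite sqfrobE mulr_sumr -sumEFin; apply: lee_sum => k _.
rewrite mulmxBl mul1mx trmx1 mul1mx -(mulmxA (invmx F *m C)).
exact: expect_sqr_ge_residual.
Qed.

End Residual.

Lemma psdmx_second_moment u : sqintegrable u -> psdmx (cross_moment u u).
Proof.
move=> u_sqint x; rewrite -(qform0r _ (cross_moment u u) (cross_moment u u)).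
exact: qform_cross_moment_ge0.
Qed.

Lemma measurable_feature0 : measurable_feature (fun _ _ => 0).
Proof. by move=> i; exact: measurable_cst. Qed.

Lemma sqintegrable0 : sqintegrable (fun _ _ => 0).
Proof.
split=> [|i]; first exact: measurable_feature0.
apply: (eq_integrable measurableT (fun _ => 0%E)) => [w _|]; first by rewrite expr0n.
exact: integrable0.
Qed.

End Moments.

(** * Product measures *)

Lemma bilinE (R : realType) n (W V : Type) (u : W -> 'I_n -> R) (v : V -> 'I_n -> R) x y :
  bilin u v x y = vdot (colv (u x)) (colv (v y)).
Proof. by apply: eq_bigr => i _; rewrite !mxE. Qed.

Lemma bilinC (R : realType) n (W V : Type) (u : W -> 'I_n -> R) (v : V -> 'I_n -> R) x y :
  bilin u v x y = bilin v u y x.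
Proof. by apply: eq_bigr => i _; rewrite mulrC. Qed.

Lemma measurable_bilin (R : realType) (dW dV : measure_display)
  (W : measurableType dW) (V : measurableType dV) n
  (u : W -> 'I_n -> R) (v : V -> 'I_n -> R) :
  measurable_feature u -> measurable_feature v ->
  measurable_fun setT (fun z : W * V => bilin u v z.1 z.2).
Proof.
move=> mu mv; apply: measurable_sum => i; apply: measurable_funM.
  exact: measurableT_comp (mu i) measurable_fst.
exact: measurableT_comp (mv i) measurable_snd.
Qed.

Section ProductMeasure.
Context (R : realType) (dW dV : measure_display).
Context (W : measurableType dW) (V : measurableType dV).
Variables (PW : probability W R) (PV : probability V R) (n : nat).

Lemma integral_prod_sep (a : W -> R) (b : V -> R) :
  PW.-integrable setT (EFin \o a) -> PV.-integrable setT (EFin \o b) ->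
  (forall x, 0 <= a x) -> (forall y, 0 <= b y) ->
  (\int[PW \x PV]_z (a z.1 * b z.2)%:E = (\int[PW]_x a x * \int[PV]_y b y)%:E)%E.
Proof.
move=> ia ib a_ge0 b_ge0.
have /measurable_EFinP ma := measurable_int _ ia.
have /measurable_EFinP mb := measurable_int _ ib.
rewrite (fubini_tonelli1 (fun z : W * V => (a z.1 * b z.2)%:E)); first last.
- by move=> z; rewrite lee_fin mulr_ge0.
- apply/measurable_EFinP; apply: measurable_funM.
    exact: measurableT_comp ma measurable_fst.
  exact: measurableT_comp mb measurable_snd.
have inner x : (\int[PV]_y (a x * b y)%:E = (a x * \int[PV]_y b y)%:E)%E.
  under eq_integral => y _ do rewrite EFinM.
  rewrite ge0_integralZl_EFin ?a_ge0 //.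
  - by rewrite EFinM EFin_Rintegral.
  - by move=> y _; rewrite lee_fin.
  - exact/measurable_EFinP.
rewrite /fubini_F; under eq_integral => x _ do rewrite inner mulrC EFinM.
rewrite ge0_integralZl_EFin ?Rintegral_ge0 //.
- by rewrite EFinM !EFin_Rintegral // muleC.
- by move=> x _; rewrite lee_fin.
- exact/measurable_EFinP.
Qed.

Section Risk.
Variables (u1 u2 : W -> 'I_n -> R) (v1 v2 : V -> 'I_n -> R).

Let risk_integrand (z : W * V) := ((bilin u1 v1 z.1 z.2 - bilin u2 v2 z.1 z.2) ^+ 2)%:E.

Let risk_integrand_ge0 z : (0 <= risk_integrand z)%E.
Proof. by rewrite lee_fin sqr_ge0. Qed.

Section Measurable.
Hypotheses (mu1 : measurable_feature u1) (mu2 : measurable_feature u2).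
Hypotheses (mv1 : measurable_feature v1) (mv2 : measurable_feature v2).

Lemma measurable_risk_integrand : measurable_fun setT risk_integrand.
Proof.
apply/measurable_EFinP; apply: measurable_funX.
by apply: measurable_funB; apply: measurable_bilin.
Qed.

End Measurable.

Section SquareIntegrable.
Hypotheses (u1_sqint : sqintegrable PW u1) (u2_sqint : sqintegrable PW u2).
Hypotheses (v1_sqint : sqintegrable PV v1) (v2_sqint : sqintegrable PV v2).
Let F := cross_moment PW u1 u1.
Let L := invmx F *m cross_moment PW u1 u2.

Let measurable_risk_integrand' : measurable_fun setT risk_integrand.
Proof. exact: measurable_risk_integrand u1_sqint.1 u2_sqint.1 v1_sqint.1 v2_sqint.1. Qed.

Lemma risk_ge_residual s : 0 < s -> (forall x, s * sqnorm x <= vdot x (F *m x)) ->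
  ((s * \int[PV]_y sqnorm (colv (v1 y) - L *m colv (v2 y)))%:E <=
    risk PW PV u1 u2 v1 v2)%E.
Proof.
move=> s_gt0 F_coer.
have res_int := integrable_sqnorm_residual v1_sqint v2_sqint L.
rewrite /risk (fubini_tonelli2 _ measurable_risk_integrand' risk_integrand_ge0).
rewrite EFinM EFin_Rintegral // -integralZl //.
apply: ge0_le_integral => //.
- by move=> y _; rewrite -EFinM lee_fin mulr_ge0 ?sqnorm_ge0 ?ltW.
- by apply: emeasurable_funM => //; exact: measurable_int res_int.
- exact: measurable_fun_fubini_tonelli_G measurable_risk_integrand' risk_integrand_ge0.
move=> y _; rewrite -EFinM /fubini_G /risk_integrand /=.
under eq_integral => x _ do rewrite !bilinE (vdotC (colv (u1 x))) (vdotC (colv (u2 x))).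
exact: expect_sqr_ge_residual.
Qed.

End SquareIntegrable.

Lemma risk_le_sep (a1 a2 : W -> R) (b1 b2 : V -> R) c :
  measurable_feature u1 -> measurable_feature u2 ->
  measurable_feature v1 -> measurable_feature v2 ->
  PW.-integrable setT (EFin \o a1) -> PW.-integrable setT (EFin \o a2) ->
  PV.-integrable setT (EFin \o b1) -> PV.-integrable setT (EFin \o b2) ->
  (forall x, 0 <= a1 x) -> (forall x, 0 <= a2 x) ->
  (forall y, 0 <= b1 y) -> (forall y, 0 <= b2 y) -> 0 <= c ->
  (forall x y, (bilin u1 v1 x y - bilin u2 v2 x y) ^+ 2 <= c * (a1 x * b1 y + a2 x * b2 y)) ->
  (risk PW PV u1 u2 v1 v2 <=
    (c * (\int[PW]_x a1 x * \int[PV]_y b1 y + \int[PW]_x a2 x * \int[PV]_y b2 y))%:E)%E.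
Proof.
move=> mu1 mu2 mv1 mv2 ia1 ia2 ib1 ib2 a1_ge0 a2_ge0 b1_ge0 b2_ge0 c_ge0 bound.
have mprod (a : W -> R) (b : V -> R) : PW.-integrable setT (EFin \o a) ->
    PV.-integrable setT (EFin \o b) ->
    measurable_fun setT (fun z : W * V => (a z.1 * b z.2)%:E).
  move=> /measurable_int/measurable_EFinP ma /measurable_int/measurable_EFinP mb.
  apply/measurable_EFinP; apply: measurable_funM.
    exact: measurableT_comp ma measurable_fst.
  exact: measurableT_comp mb measurable_snd.
have prod_ge0 (a : W -> R) (b : V -> R) : (forall x, 0 <= a x) -> (forall y, 0 <= b y) ->
    forall z : W * V, (0 <= (a z.1 * b z.2)%:E)%E.
  by move=> a_ge0 b_ge0 z; rewrite lee_fin mulr_ge0.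
apply: le_trans (_ : _ <= \int[PW \x PV]_z
    (c%:E * ((a1 z.1 * b1 z.2)%:E + (a2 z.1 * b2 z.2)%:E)))%E _.
  apply: ge0_le_integral => //.
  - by move=> z _; rewrite lee_fin sqr_ge0.
  - exact: measurable_risk_integrand.
  - by apply: emeasurable_funM => //; apply: emeasurable_funD; exact: mprod.
  - by move=> [x y] _; rewrite -EFinD -EFinM lee_fin bound.
rewrite ge0_integralZl_EFin //; last 2 first.
- by move=> z _; rewrite adde_ge0 ?prod_ge0.
- by apply: emeasurable_funD; exact: mprod.
rewrite ge0_integralD //; last 4 first.
- by move=> z _; exact: prod_ge0.
- exact: mprod.
- by move=> z _; exact: prod_ge0.
- exact: mprod.
by rewrite !integral_prod_sep // -EFinD -EFinM.
Qed.

End Risk.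

Lemma sq_moment_risk0 (u : W -> 'I_n -> R) (v : V -> 'I_n -> R) :
  sq_moment PW PV u v = risk PW PV u (fun _ _ => 0) v (fun _ _ => 0).
Proof.
apply: eq_integral => z _; congr (_ ^+ 2)%:E.
by rewrite [X in _ - X]big1 ?subr0 // => i _; rewrite mulr0.
Qed.

Lemma sq_moment_ge (u : W -> 'I_n -> R) (v : V -> 'I_n -> R) s :
  sqintegrable PW u -> sqintegrable PV v -> 0 < s ->
  (forall x, s * sqnorm x <= vdot x (cross_moment PW u u *m x)) ->
  ((s * \int[PV]_y sqnorm (colv (v y)))%:E <= sq_moment PW PV u v)%E.
Proof.
move=> u_sqint v_sqint s_gt0 F_coer; rewrite sq_moment_risk0.
apply: le_trans (risk_ge_residual u_sqint (sqintegrable0 _ _) v_sqint (sqintegrable0 _ _)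
  s_gt0 F_coer).
rewrite lee_fin ler_pM2l //.
by under [X in _ <= X]eq_Rintegral => y _ do rewrite colv0 mulmx0 subr0.
Qed.

End ProductMeasure.

Lemma risk_swap (R : realType) (dW dV : measure_display)
  (W : measurableType dW) (V : measurableType dV)
  (PW : probability W R) (PV : probability V R) n
  (u1 u2 : W -> 'I_n -> R) (v1 v2 : V -> 'I_n -> R) :
  measurable_feature u1 -> measurable_feature u2 ->
  measurable_feature v1 -> measurable_feature v2 ->
  risk PW PV u1 u2 v1 v2 = risk PV PW v1 v2 u1 u2.
Proof.
move=> mu1 mu2 mv1 mv2; have sqr_ge0E (x : R) : (0 <= (x ^+ 2)%:E)%E by rewrite lee_fin sqr_ge0.
rewrite /risk (fubini_tonelli1 _ (measurable_risk_integrand mu1 mu2 mv1 mv2)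
  (fun=> sqr_ge0E _)).
rewrite [RHS](fubini_tonelli2 _ (measurable_risk_integrand mv1 mv2 mu1 mu2)
  (fun=> sqr_ge0E _)).
apply: eq_integral => x _; apply: eq_integral => y _.
by rewrite /= [bilin u1 _ _ _]bilinC [bilin u2 _ _ _]bilinC.
Qed.

(** * Transfer of the risk *)

Section TransferArithmetic.
Variable R : realFieldType.

Let product_sum_le (s e2 M2 x1 x2 x3 x4 : R) :
  0 < s -> 0 <= e2 -> 0 <= x1 -> 0 <= x2 -> 0 <= x3 -> 0 <= x4 ->
  x1 <= M2 -> x2 <= M2 -> x3 <= e2 -> x4 <= e2 -> s <= M2 -> e2 <= s / 4 ->
  e2 * (x1 * x2) + s * (x2 * x3) + s * (x1 * x4) + s * (x3 * x4) <= 4 * e2 * M2 ^+ 2.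
Proof.
move=> s_gt0 e2_ge0 x1_ge0 x2_ge0 x3_ge0 x4_ge0 h1 h2 h3 h4 hs he2.
have := ler_pM x1_ge0 x2_ge0 h1 h2.
have := ler_pM (ltW s_gt0) (mulr_ge0 x2_ge0 x3_ge0) hs (ler_pM x2_ge0 x3_ge0 h2 h3).
have := ler_pM (ltW s_gt0) (mulr_ge0 x1_ge0 x4_ge0) hs (ler_pM x1_ge0 x4_ge0 h1 h4).
have := ler_wpM2l (ltW s_gt0) (ler_pM x3_ge0 x4_ge0 h3 h4).
have := ler_pM (ltW s_gt0) (ltW s_gt0) hs hs.
have := mulr_ge0 (ltW s_gt0) (ltW s_gt0); have := ler_wpM2l (ltW s_gt0) he2.
rewrite expr2; nra.
Qed.

Lemma transfer_arith (sf sg e2 M2 ef eg ed ee : R) :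
  0 < sf -> 0 < sg -> 0 <= e2 -> 0 <= ef -> 0 <= eg -> 0 <= ed -> 0 <= ee ->
  sg * ef <= M2 -> sf * eg <= M2 -> sg * ed <= e2 -> sf * ee <= e2 ->
  sf * sg <= M2 -> e2 <= sf * sg / 4 ->
  16 * ((e2 / (sf * sg) * ef + ed) * eg + (ef + ed) * ee)
    <= 64 * e2 * M2 ^+ 2 / (sf * sg) ^+ 2.
Proof.
move=> sf_gt0 sg_gt0 e2_ge0 ef_ge0 eg_ge0 ed_ge0 ee_ge0 hf hg hd he hs he2.
have s_gt0 : 0 < sf * sg by rewrite mulr_gt0.
have := product_sum_le s_gt0 e2_ge0 (mulr_ge0 (ltW sg_gt0) ef_ge0)
  (mulr_ge0 (ltW sf_gt0) eg_ge0) (mulr_ge0 (ltW sg_gt0) ed_ge0)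
  (mulr_ge0 (ltW sf_gt0) ee_ge0) hf hg hd he hs he2.
rewrite ler_pdivlMr ?exprn_gt0 //.
have -> : 16 * ((e2 / (sf * sg) * ef + ed) * eg + (ef + ed) * ee) * (sf * sg) ^+ 2 =
    16 * (e2 * (sg * ef * (sf * eg)) + sf * sg * (sf * eg * (sg * ed))
          + sf * sg * (sg * ef * (sf * ee)) + sf * sg * (sg * ed * (sf * ee))).
  by field; rewrite !gt_eqF.
lra.
Qed.

End TransferArithmetic.

Section Transfer.
Context (R : realType) (dW dV : measure_display).
Context (W : measurableType dW) (V : measurableType dV).
Variables (p : nat) (fs fh : W -> 'I_p -> R) (gs gh : V -> 'I_p -> R).
Variables (DW : bool -> probability W R) (DV : bool -> probability V R).
Hypotheses (fs_sqint : forall b, sqintegrable (DW b) fs).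
Hypotheses (fh_sqint : forall b, sqintegrable (DW b) fh).
Hypotheses (gs_sqint : forall b, sqintegrable (DV b) gs).
Hypotheses (gh_sqint : forall b, sqintegrable (DV b) gh).

Let sf := sigma_min (cross_moment (DW true) fs fs).
Let sg := sigma_min (cross_moment (DV true) gs gs).
Hypotheses (sf_gt0 : 0 < sf) (sg_gt0 : 0 < sg).

Let L := invmx (cross_moment (DW true) fs fs) *m cross_moment (DW true) fs fh.
Let U := invmx (cross_moment (DV true) gs gs) *m cross_moment (DV true) gs gh.

Let Ef b := \int[DW b]_w sqnorm (colv (fs w)).
Let Eg b := \int[DV b]_v sqnorm (colv (gs v)).
Let Ed b := \int[DW b]_w sqnorm (colv (fs w) - U *m colv (fh w)).
Let Ee b := \int[DV b]_v sqnorm (colv (gs v) - L *m colv (gh v)).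

Let F_coercive x :
  sf * sqnorm x <= vdot x (cross_moment (DW true) fs fs *m x).
Proof.
exact: sigma_min_coercive (cross_moment_sym _ _) (psdmx_second_moment (fs_sqint true)) x.
Qed.

Let G_coercive x :
  sg * sqnorm x <= vdot x (cross_moment (DV true) gs gs *m x).
Proof.
exact: sigma_min_coercive (cross_moment_sym _ _) (psdmx_second_moment (gs_sqint true)) x.
Qed.

Lemma risk_DW1_ge j : ((sf * Ee j)%:E <= risk (DW true) (DV j) fs fh gs gh)%E.
Proof. exact: risk_ge_residual sf_gt0 F_coercive. Qed.

Lemma risk_DV1_ge i : ((sg * Ed i)%:E <= risk (DW i) (DV true) fs fh gs gh)%E.
Proof.
rewrite (risk_swap _ _ (fs_sqint i).1 (fh_sqint i).1 (gs_sqint true).1 (gh_sqint true).1).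
exact: risk_ge_residual sg_gt0 G_coercive.
Qed.

Lemma sq_moment_DW1_ge j : ((sf * Eg j)%:E <= sq_moment (DW true) (DV j) fs gs)%E.
Proof. exact: sq_moment_ge (fs_sqint true) (gs_sqint j) sf_gt0 F_coercive. Qed.

Lemma sq_moment_DV1_ge i : ((sg * Ef i)%:E <= sq_moment (DW i) (DV true) fs gs)%E.
Proof.
rewrite sq_moment_risk0 (risk_swap _ _ (fs_sqint i).1 (@measurable_feature0 _ _ _ _)
  (gs_sqint true).1 (@measurable_feature0 _ _ _ _)) -sq_moment_risk0.
exact: sq_moment_ge (gs_sqint true) (fs_sqint i) sg_gt0 G_coercive.
Qed.

Let integrable_sqnorm_fs b :
  (DW b).-integrable setT (EFin \o (fun w => sqnorm (colv (fs w)))).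
Proof.
apply: eq_integrable (integrable_sqnorm_residual (fs_sqint b) (fs_sqint b) 0) => // w _.
by rewrite mul0mx subr0.
Qed.

Let integrable_sqnorm_gs b :
  (DV b).-integrable setT (EFin \o (fun v => sqnorm (colv (gs v)))).
Proof.
apply: eq_integrable (integrable_sqnorm_residual (gs_sqint b) (gs_sqint b) 0) => // v _.
by rewrite mul0mx subr0.
Qed.

Let integrable_Ed b := integrable_sqnorm_residual (fs_sqint b) (fh_sqint b) U.
Let integrable_Ee b := integrable_sqnorm_residual (gs_sqint b) (gh_sqint b) L.

(* [Ef true] is the trace of [F1], hence at least [p * sf]. *)
Lemma sigma_min_le_Ef : sf <= Ef true.
Proof.
have p_gt0 : (0 < p)%N := sigma_min_gt0_dim sf_gt0.
have := expect_sqnorm_residual_ge (fs_sqint true) (fs_sqint true) 0 sf_gt0 F_coercive.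
rewrite trmx0 mulmx0 subr0 sqfrob1.
under eq_integral => w _ do rewrite mul0mx subr0.
rewrite -(EFin_Rintegral (integrable_sqnorm_fs true)) lee_fin => h; apply: le_trans h.
by rewrite ler_peMr ?ler1n //; exact: ltW.
Qed.

Lemma sqfrob_le_Ee : sg * sqfrob (1%:M - U *m L^T) <= Ee true.
Proof.
have := expect_sqnorm_residual_ge (gs_sqint true) (gh_sqint true) L sg_gt0 G_coercive.
by rewrite -(EFin_Rintegral (integrable_Ee true)) lee_fin.
Qed.

Lemma risk_target_le eta : 0 <= eta -> eta <= 1 / 2 ->
  sqfrob (1%:M - U *m L^T) <= eta ^+ 2 ->
  (risk (DW false) (DV false) fs fh gs gh <=
    (16 * ((eta ^+ 2 * Ef false + Ed false) * Eg false
           + (Ef false + Ed false) * Ee false))%:E)%E.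
Proof.
move=> eta_ge0 eta_le_half UL_near1.
set d := fun w => sqnorm (colv (fs w) - U *m colv (fh w)).
set f := fun w => sqnorm (colv (fs w)).
have int_f := integrable_sqnorm_fs false; have int_d := integrable_Ed false.
have int_ef : (DW false).-integrable setT (EFin \o (fun w => eta ^+ 2 * f w)).
  by apply: eq_integrable (integrableZl _ (eta ^+ 2) int_f).
have -> : eta ^+ 2 * Ef false + Ed false = \int[DW false]_w (eta ^+ 2 * f w + d w).
  by rewrite RintegralD ?RintegralZl.
have -> : Ef false + Ed false = \int[DW false]_w (f w + d w) by rewrite RintegralD.
have int_a1 : (DW false).-integrable setT (EFin \o (fun w => eta ^+ 2 * f w + d w)).
  by apply: eq_integrable (integrableD _ int_ef int_d).
have int_a2 : (DW false).-integrable setT (EFin \o (fun w => f w + d w)).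
  by apply: eq_integrable (integrableD _ int_f int_d).
apply: (risk_le_sep (fs_sqint false).1 (fh_sqint false).1 (gs_sqint false).1
  (gh_sqint false).1 int_a1 int_a2 (integrable_sqnorm_gs false) (integrable_Ee false)) => //.
- by move=> w; rewrite addr_ge0 ?mulr_ge0 ?sqr_ge0 ?sqnorm_ge0.
- by move=> w; rewrite addr_ge0 ?sqnorm_ge0.
- by move=> v; exact: sqnorm_ge0.
- by move=> v; exact: sqnorm_ge0.
move=> w v; rewrite !bilinE.
have := bilinear_perturbation eta_ge0 eta_le_half UL_near1
  (colv (fs w)) (colv (fh w)) (colv (gs v)) (colv (gh v)).
by rewrite /f /d; lra.
Qed.

Variables (eps Ms : R).
Hypothesis eps_ge0 : 0 <= eps.
Hypothesis risk_le : forall bi bj, bi || bj ->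
  (risk (DW bi) (DV bj) fs fh gs gh <= (eps ^+ 2)%:E)%E.
Hypothesis sq_moment_le : forall bi bj, bi || bj ->
  (sq_moment (DW bi) (DV bj) fs gs <= (Ms ^+ 2)%:E)%E.
Hypothesis eps_lt : eps < Num.sqrt (sf * sg) / 2.

Let Ee_le j : sf * Ee j <= eps ^+ 2.
Proof. by rewrite -lee_fin (le_trans (risk_DW1_ge j) (@risk_le true j isT)). Qed.

Let Ed_le i : sg * Ed i <= eps ^+ 2.
Proof. by rewrite -lee_fin (le_trans (risk_DV1_ge i) (@risk_le i true (orbT i))). Qed.

Let Eg_le j : sf * Eg j <= Ms ^+ 2.
Proof. by rewrite -lee_fin (le_trans (sq_moment_DW1_ge j) (@sq_moment_le true j isT)). Qed.

Let Ef_le i : sg * Ef i <= Ms ^+ 2.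
Proof.
by rewrite -lee_fin (le_trans (sq_moment_DV1_ge i) (@sq_moment_le i true (orbT i))).
Qed.

Let sigma_min_prod_le : sf * sg <= Ms ^+ 2.
Proof. by rewrite mulrC; apply: le_trans (Ef_le true); rewrite ler_pM2l // sigma_min_le_Ef. Qed.

Lemma risk_transfer : (risk (DW false) (DV false) fs fh gs gh <=
  (64 * eps ^+ 2 * Ms ^+ 4 / (sf * sg) ^+ 2)%:E)%E.
Proof.
have s_gt0 : 0 < sf * sg by rewrite mulr_gt0.
have sqrt_gt0 : 0 < Num.sqrt (sf * sg) by rewrite sqrtr_gt0.
have eps2_le : eps ^+ 2 <= sf * sg / 4.
  have := ler_pM eps_ge0 eps_ge0 (ltW eps_lt) (ltW eps_lt).
  have := sqr_sqrtr (ltW s_gt0); rewrite !expr2; lra.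
set eta := eps / Num.sqrt (sf * sg).
have eta2 : eta ^+ 2 = eps ^+ 2 / (sf * sg).
  by rewrite /eta expr_div_n (sqr_sqrtr (ltW s_gt0)).
have eta_ge0 : 0 <= eta by rewrite /eta divr_ge0 // ltW.
have eta_le_half : eta <= 1 / 2.
  by rewrite /eta ler_pdivrMr // mulrC mul1r; apply: ltW.
have UL_near1 : sqfrob (1%:M - U *m L^T) <= eta ^+ 2.
  rewrite eta2 ler_pdivlMr // mulrC -mulrA.
  exact: le_trans (ler_wpM2l (ltW sf_gt0) sqfrob_le_Ee) (Ee_le true).
apply: le_trans (risk_target_le eta_ge0 eta_le_half UL_near1) _.
rewrite lee_fin eta2 (_ : Ms ^+ 4 = (Ms ^+ 2) ^+ 2); last by rewrite -exprM.
apply: (transfer_arith sf_gt0 sg_gt0 (sqr_ge0 eps) _ _ _ _ (Ef_le false) (Eg_le false)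
  (Ed_le false) (Ee_le false) sigma_min_prod_le eps2_le).
all: by apply: Rintegral_ge0 => w _; exact: sqnorm_ge0.
Qed.

End Transfer.

Theorem mainTheorem6 (R : realType) (dW dV : measure_display)
  (W : measurableType dW) (V : measurableType dV) (p : nat)
  (fs fh : W -> 'I_p -> R) (gs gh : V -> 'I_p -> R)
  (DW : bool -> probability W R) (DV : bool -> probability V R)
  (eps Ms : R) :
  (* measurability of the feature maps (componentwise) *)
  (forall i, measurable_fun setT (fun w => fs w i)) ->
  (forall i, measurable_fun setT (fun w => fh w i)) ->
  (forall i, measurable_fun setT (fun v => gs v i)) ->
  (forall i, measurable_fun setT (fun v => gh v i)) ->
  (* finiteness of the relevant (second) moments; index true = 1, false = 2 *)
  (forall b i, (DW b).-integrable setT (fun w => (fs w i ^+ 2)%:E)) ->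
  (forall b i, (DW b).-integrable setT (fun w => (fh w i ^+ 2)%:E)) ->
  (forall b i, (DV b).-integrable setT (fun v => (gs v i ^+ 2)%:E)) ->
  (forall b i, (DV b).-integrable setT (fun v => (gh v i ^+ 2)%:E)) ->
  0 <= eps ->
  (* hypotheses for all (i,j) <> (2,2) *)
  (forall bi bj, bi || bj ->
     (risk (DW bi) (DV bj) fs fh gs gh <= (eps ^+ 2)%:E)%E /\
     (sq_moment (DW bi) (DV bj) fs gs <= (Ms ^+ 2)%:E)%E) ->
  (* sigma_star^2 := sigma_p(E_{D_W1}[fs fs^T]) * sigma_p(E_{D_V1}[gs gs^T]) > 0 *)
  0 < sigma_min (second_moment (DW true) fs) *
      sigma_min (second_moment (DV true) gs) ->
  eps < Num.sqrt (sigma_min (second_moment (DW true) fs) *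
                  sigma_min (second_moment (DV true) gs)) / 2 ->
  (risk (DW false) (DV false) fs fh gs gh <=
     (64 * eps ^+ 2 * Ms ^+ 4 /
       (sigma_min (second_moment (DW true) fs) *
        sigma_min (second_moment (DV true) gs)) ^+ 2)%:E)%E.
Proof.
move=> mfs mfh mgs mgh ifs ifh igs igh eps_ge0 bounds sigma_gt0 eps_lt.
have /andP [sf_gt0 sg_gt0] : (0 < sigma_min (second_moment (DW true) fs)) &&
    (0 < sigma_min (second_moment (DV true) gs)).
  by rewrite -mulr_ge0_gt0 ?sigma_min_ge0.
apply: (risk_transfer (fun b => conj mfs (ifs b)) (fun b => conj mfh (ifh b))
  (fun b => conj mgs (igs b)) (fun b => conj mgh (igh b)) sf_gt0 sg_gt0 eps_ge0) => //.
- by move=> bi bj /bounds [].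
- by move=> bi bj /bounds [].
Qed.
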